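(* Among all spiro hexagonal chains with $n$ hexagons, $n\ge4$: (i) the unique spiro hexagonal chain with the minimum Wiener index is the spiro ortho-chain $O_n$; (ii) the unique spiro hexagonal chain with the second minimal Wiener index is the spiro hexagonal chain with cut-vertex sequence $(c_2,\dots,c_{n-1})=(o_1,\dots,o_{n-3},m_{n-2})$; (iii) the unique spiro hexagonal chain with the third minimal Wiener index is the spiro hexagonal chain with cut-vertex sequence $(c_2,\dots,c_{n-1})=(o_1,\dots,o_{n-4},m_{n-3},o_{n-2})$.
   Context: The Wiener index is $W(G)=\sum_{\{u,v\}\subseteq V(G)}d_G(u,v)$, $d_G$ the shortest-path distance. A spiro hexagonal chain of length $n$, $G_n=H_0H_1\cdots H_{n-1}$, is a connected graph in which every block is a hexagon (6-cycle) $H_0,\dots,H_{n-1}$, each hexagon has at most two cut-vertices, each cut-vertex is shared by exactly two hexagons, and for $k=1,\dots,n-1$ the hexagons $H_{k-1}$ and $H_k$ share the cut-vertex $c_k$. For $k\ge1$, a vertex of $H_k$ at distance $1$, $2$, $3$ from $c_k$ is called an ortho-, meta-, para-vertex of $H_k$, denoted $o_k,m_k,p_k$. For $2\le k\le n-1$, $c_k$ is one of $o_{k-1},m_{k-1},p_{k-1}$, and the sequence $(c_2,\dots,c_{n-1})$ (recording these types) is the cut-vertex sequence, which determines the chain up to isomorphism; chains are considered up to isomorphism. The spiro ortho-chain $O_n$ is the chain with $c_k=o_{k-1}$ for all $2\le k\le n-1$. *)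

From mathcomp Require Import all_boot all_fingroup.
Set Implicit Arguments. Unset Strict Implicit. Unset Printing Implicit Defensive.

Definition ball (T : finType) (e : rel T) (k : nat) (u : T) : {set T} :=
  iter k (fun A => A :|: [set y | [exists x in A, e x y]]) [set u].

(** Shortest-path distance: least [k] such that [v] is reachable from [u]
    within [k] steps (for connected graphs, as here, it is always < #|T|). *)
Definition gdist (T : finType) (e : rel T) (u v : T) : nat :=
  find (fun k => v \in ball e k u) (iota 0 #|T|).

Definition wiener (N : nat) (e : rel 'I_N) : nat :=
  \sum_(u : 'I_N) \sum_(v : 'I_N | (u < v)%N) gdist e u v.

Definition graph_iso (N : nat) (e1 e2 : rel 'I_N) : Prop :=
  exists f : {perm 'I_N}, forall x y, e1 x y = e2 (f x) (f y).

(** Type of a cut vertex c_k in H_{k-1}: ortho / meta / para,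
    i.e. distance 1 / 2 / 3 from c_{k-1} in H_{k-1}. *)
Inductive ctype := Ortho | Meta | Para.

Definition ctype_dist (t : ctype) : nat :=
  match t with Ortho => 1 | Meta => 2 | Para => 3 end.

(** Concrete labelling of the chain G_n = H_0 ... H_{n-1} determined by the
    cut-vertex sequence [s] = (c_2,...,c_{n-1}) (an element of [s] at index
    i is the type of c_{i+2}).
    Hexagon H_0 has vertices 0..5 (in cyclic order), and c_1 = 0.
    For k >= 1, hexagon H_k has cyclic vertex list
      [c_k; 5k+1; 5k+2; 5k+3; 5k+4; 5k+5],
    and for k >= 2, c_k is the vertex of H_{k-1} at cyclic position
    d = ctype_dist (type of c_k), i.e. at distance d from c_{k-1}. *)
Definition spiro_cut (s : seq ctype) (k : nat) : nat :=
  if (k <= 1)%N then 0 else 5 * k.-1 + ctype_dist (nth Ortho s (k - 2)).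

Definition spiro_hv (s : seq ctype) (k j : nat) : nat :=
  if k == 0 then j else if j == 0 then spiro_cut s k else 5 * k + j.

Definition spiro_adj_nat (n : nat) (s : seq ctype) (u v : nat) : bool :=
  has (fun k => has (fun j =>
         let a := spiro_hv s k j in let b := spiro_hv s k ((j.+1) %% 6) in
         ((u == a) && (v == b)) || ((u == b) && (v == a)))
       (iota 0 6)) (iota 0 n).

Definition spiro_chain (n : nat) (s : seq ctype) : rel 'I_(5 * n + 1) :=
  fun x y => spiro_adj_nat n s x y.

Arguments spiro_chain : clear implicits.

Definition spiro_W (n : nat) (s : seq ctype) : nat := wiener (spiro_chain n s).

Definition spiro_iso (n : nat) (s t : seq ctype) : Prop :=
  graph_iso (spiro_chain n s) (spiro_chain n t).

Definition seq_ortho (n : nat) : seq ctype := nseq (n - 2) Ortho.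
Definition seq_second (n : nat) : seq ctype := rcons (nseq (n - 3) Ortho) Meta.
Definition seq_third (n : nat) : seq ctype :=
  rcons (rcons (nseq (n - 4) Ortho) Meta) Ortho.

(* Write a vertex as a position in one of the hexagons H_k.  The distance between
   two vertices is explicit: walk inside the first hexagon to its cut vertex
   towards the second, add the cut-to-cut gaps d_k in {1,2,3} (ortho, meta, para)
   of the hexagons in between, and walk inside the last one.  Summing over pairs,
   W(G) = W(O_n) + 25 * sum_j (j+1)(m-j)(d_j - 1) with m = n - 2, where j indexes
   c_{j+2}.  The weight (j+1)(m-j) is at least m, equal to m only at the two ends
   and to 2(m-1) only next to them, while a chain other than O_n pays at least
   2m unless its only non-ortho cut vertex is a single meta one.  Since reversing
   the chain is an isomorphism, the three smallest values are attained exactly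
   by the three listed chains. *)

From mathcomp Require Import all_boot all_fingroup.
From mathcomp Require Import zify.
Set Implicit Arguments. Unset Strict Implicit. Unset Printing Implicit Defensive.

Section GraphDistance.

Variables (T : finType) (e : rel T).

Lemma ballS k u : ball e k.+1 u = ball e k u :|: [set y | [exists x in ball e k u, e x y]].
Proof. by rewrite /ball iterS. Qed.

Lemma ball_le_potential (f : T -> nat) u : f u = 0 ->
  (forall a b, e a b -> f b <= (f a).+1) ->
  forall k v, v \in ball e k u -> f v <= k.
Proof.
move=> fu0 f_lip; elim=> [|k IHk] v.
  by rewrite /ball /= inE => /eqP ->; rewrite fu0.
rewrite ballS inE => /orP[/IHk | ]; first lia.
rewrite inE => /existsP [w /andP[/IHk fw /f_lip]]; lia.
Qed.

Lemma mem_ball_potential (f : T -> nat) u :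
  (forall y, f y = 0 -> y = u) ->
  (forall y, 0 < f y -> exists w, e w y /\ (f w).+1 = f y) ->
  forall y, y \in ball e (f y) u.
Proof.
move=> f_eq0 f_pred y; move Ed: (f y) => d.
elim: d y Ed => [|d IHd] y fy; first by rewrite (f_eq0 _ fy) /ball /= inE.
have [w [ewy fw]] := f_pred y (ltac:(lia)).
rewrite ballS !inE; apply/orP; right; apply/existsP; exists w.
by rewrite ewy andbT IHd //; lia.
Qed.

Lemma gdist_potential (f : T -> nat) u v :
  f u = 0 -> (forall y, f y = 0 -> y = u) ->
  (forall a b, e a b -> f b <= (f a).+1) ->
  (forall y, 0 < f y -> exists w, e w y /\ (f w).+1 = f y) ->
  f v < #|T| -> gdist e u v = f v.
Proof.
move=> fu0 f_eq0 f_lip f_pred fvT; rewrite /gdist.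
set p := fun k => v \in ball e k u.
have pv : p (f v) by exact: mem_ball_potential.
have hp : has p (iota 0 #|T|) by apply/hasP; exists (f v); rewrite // mem_iota.
have fT : find p (iota 0 #|T|) < #|T| by rewrite -[X in _ < X](size_iota 0 #|T|) -has_find.
case: (ltngtP (find p (iota 0 #|T|)) (f v)) => // hlt.
- have := nth_find 0 hp; rewrite nth_iota // add0n.
  by move/(ball_le_potential fu0 f_lip); lia.
- by have := before_find 0 hlt; rewrite nth_iota // add0n pv.
Qed.

Lemma ball_perm (e' : rel T) (f : {perm T}) u :
  (forall x y, e x y = e' (f x) (f y)) ->
  forall k v, (v \in ball e k u) = (f v \in ball e' k (f u)).
Proof.
move=> ef; elim=> [|k IHk] v; first by rewrite /ball /= !inE (inj_eq perm_inj).
rewrite !ballS !inE IHk; congr (_ || _).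
apply/existsP/existsP => [[x /andP[xb exv]]|[x' /andP[xb exv]]].
  by exists (f x); rewrite -IHk xb -ef.
by exists ((f^-1)%g x'); rewrite IHk permKV xb ef permKV.
Qed.

Lemma gdistxx u : gdist e u u = 0.
Proof.
rewrite /gdist; have : 0 < #|T| by apply/card_gt0P; exists u.
by case: #|T| => // N _; rewrite /= /ball /= inE eqxx.
Qed.

Lemma gdist_perm (e' : rel T) (f : {perm T}) u v :
  (forall x y, e x y = e' (f x) (f y)) -> gdist e u v = gdist e' (f u) (f v).
Proof. by move=> ef; apply: eq_find => k; exact: ball_perm. Qed.

End GraphDistance.

Lemma sum_pairs_half N (g : 'I_N -> 'I_N -> nat) :
  (forall u v, g u v = g v u) -> (forall u, g u u = 0) ->
  2 * (\sum_(u : 'I_N) \sum_(v : 'I_N | u < v) g u v) = \sum_u \sum_v g u v.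
Proof.
move=> gC g0.
have split_row u : \sum_v g u v =
    \sum_(v : 'I_N | u < v) g u v + \sum_(v : 'I_N | v < u) g u v.
  rewrite (bigID (fun v : 'I_N => u < v)) /=; congr (_ + _).
  rewrite (bigID (fun v : 'I_N => v < u)) /= [X in _ + X]big1 ?addn0.
    by apply: eq_bigl => v; case: ltngtP.
  move=> v; rewrite -!leqNgt => /andP[h1 h2].
  by have -> : v = u by apply/val_inj/eqP; rewrite eqn_leq h1 h2.
rewrite (eq_bigr _ (fun u _ => split_row u)) big_split /= mul2n -addnn.
congr (_ + _).
rewrite [RHS](eq_bigr (fun u : 'I_N => \sum_(v : 'I_N) if v < u then g u v else 0)).
  rewrite [RHS]exchange_big; apply: eq_bigr => u _.
  by rewrite big_mkcond; apply: eq_bigr => v _; rewrite gC.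
by move=> u _; rewrite big_mkcond.
Qed.

Lemma wiener_graph_iso N (e1 e2 : rel 'I_N) :
  (forall u v, gdist e1 u v = gdist e1 v u) -> (forall u v, gdist e2 u v = gdist e2 v u) ->
  graph_iso e1 e2 -> wiener e1 = wiener e2.
Proof.
move=> e1C e2C [f ef].
apply/eqP; rewrite -(eqn_pmul2l (isT : 0 < 2)) /wiener.
rewrite (sum_pairs_half e1C (gdistxx e1)) (sum_pairs_half e2C (gdistxx e2)); apply/eqP.
rewrite [RHS](reindex_inj (h := f) perm_inj); apply: eq_bigr => u _.
rewrite [RHS](reindex_inj (h := f) perm_inj); apply: eq_bigr => v _.
exact: gdist_perm.
Qed.

(** * Distances in a spiro chain *)

Definition hexd (p q : nat) : nat :=
  let d := if p <= q then q - p else p - q in minn d (6 - d).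

Lemma hexdC p q : hexd p q = hexd q p.
Proof. by rewrite /hexd; case: (leqP p q); case: (leqP q p); lia. Qed.

Lemma hexdd p : hexd p p = 0.
Proof. by rewrite /hexd leqnn subnn; lia. Qed.

Lemma hexd0n t : t <= 3 -> hexd 0 t = t.
Proof. by rewrite /hexd leq0n subn0; lia. Qed.

Lemma hexd_le3 p q : hexd p q <= 3.
Proof. by rewrite /hexd; case: (leqP p q); lia. Qed.

Lemma hexd_eq0 p q : p < 6 -> q < 6 -> hexd p q = 0 -> p = q.
Proof. by rewrite /hexd; case: (leqP p q); lia. Qed.

Ltac case6 x := case: x => [|[|[|[|[|[|x]]]]]] //=.

Lemma hexd_succ p j : p < 6 -> j < 6 ->
  hexd p (j.+1 %% 6) <= (hexd p j).+1 /\ hexd p j <= (hexd p (j.+1 %% 6)).+1.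
Proof. by case6 p; case6 j. Qed.

Lemma hexd_descent p j : p < 6 -> j < 6 -> 0 < hexd p j ->
  (hexd p (j.+1 %% 6)).+1 = hexd p j \/ (hexd p ((j + 5) %% 6)).+1 = hexd p j.
Proof. by case6 p; case6 j; move=> *; (by left) || (by right). Qed.

(* [hop s k] is the distance in H_k between its cut vertices c_k and c_{k+1};
   it is meaningful for 1 <= k <= n - 2 only. *)
Definition hop (s : seq ctype) (k : nat) : nat := ctype_dist (nth Ortho s k.-1).

Definition hops (s : seq ctype) (a b : nat) : nat := \sum_(a <= k < b) hop s k.

(* Position in H_k of the cut vertex c_{k+1}, counted from c_k (or from the
   vertex 0 = c_1 when k = 0). *)
Definition exit_pos (s : seq ctype) (k : nat) : nat := if k == 0 then 0 else hop s k.

(* Distance between position p of H_i and position q of H_j. *)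
Definition hex_dist (s : seq ctype) (i p j q : nat) : nat :=
  if i == j then hexd p q
  else if i < j then hexd p (exit_pos s i) + hops s i.+1 j + hexd 0 q
  else hexd q (exit_pos s j) + hops s j.+1 i + hexd 0 p.

(* Every vertex x is [spiro_hv s (blk x) (pos x)], with 0 < pos x unless x = 0. *)
Definition blk (x : nat) : nat := (x - 1) %/ 5.
Definition pos (x : nat) : nat := x - 5 * blk x.

Definition spiro_dist (s : seq ctype) (x y : nat) : nat :=
  hex_dist s (blk x) (pos x) (blk y) (pos y).

Lemma hop_bounds s k : 1 <= hop s k <= 3.
Proof. by rewrite /hop; case: nth. Qed.

Lemma exit_pos_le3 s k : exit_pos s k <= 3.
Proof. by rewrite /exit_pos; case: eqP => // _; have /andP[] := hop_bounds s k. Qed.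

Lemma exit_pos_hop s k : 0 < k -> exit_pos s k = hop s k.
Proof. by rewrite /exit_pos; case: k. Qed.

Lemma hops_nil s a : hops s a a = 0.
Proof. by rewrite /hops big_geq. Qed.

Lemma hops_recr s a b : a <= b -> hops s a b.+1 = hops s a b + hop s b.
Proof. by move=> ab; rewrite /hops big_nat_recr. Qed.

Lemma hops_recl s a b : a < b -> hops s a b = hop s a + hops s a.+1 b.
Proof. by move=> ab; rewrite /hops big_ltn. Qed.

Lemma hops_le s a b : hops s a b <= 3 * (b - a).
Proof.
rewrite /hops; apply: leq_trans (_ : \sum_(a <= k < b) 3 <= _).
  by apply: leq_sum => k _; have /andP[] := hop_bounds s k.
by rewrite sum_nat_const_nat mulnC.
Qed.

Lemma hex_distC s i p j q : hex_dist s i p j q = hex_dist s j q i p.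
Proof. by rewrite /hex_dist; case: (ltngtP i j) => // _; exact: hexdC. Qed.

Lemma hex_dist_le s n i p j q : i < n -> j < n -> hex_dist s i p j q <= 3 * n.
Proof.
move=> iN jN; rewrite /hex_dist.
have := hexd_le3 p q; have := hexd_le3 p (exit_pos s i); have := hexd_le3 q (exit_pos s j).
have := hexd_le3 0 q; have := hexd_le3 0 p.
have := hops_le s i.+1 j; have := hops_le s j.+1 i.
by case: (ltngtP i j); lia.
Qed.

(* The exit vertex of H_{k-1} and position 0 of H_k are the same vertex c_k. *)
Lemma hex_dist_exit s k i q : 0 < k ->
  hex_dist s k.-1 (exit_pos s k.-1) i q = hex_dist s k 0 i q.
Proof.
move=> k0; rewrite /hex_dist (_ : k.-1.+1 = k); last lia.
case: (ltngtP k.-1 i) => h1; case: (ltngtP k i) => h2; try lia.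
- by rewrite hexdd (hops_recl s h2) (hexd0n (exit_pos_le3 s k)) exit_pos_hop //; lia.
- by subst i; rewrite hexdd hops_nil.
- have -> : hops s i.+1 k = hops s i.+1 k.-1 + hop s k.-1.
    by rewrite -hops_recr ?(prednK k0) //; lia.
  rewrite (hexd0n (exit_pos_le3 s k.-1)) (exit_pos_hop s (_ : 0 < k.-1)); last lia.
  by rewrite hexdd; lia.
- by subst i; rewrite prednK // hops_nil hexdd !addn0 hexdC.
Qed.

Lemma spiro_cut_exit s k : 0 < k -> spiro_cut s k = 5 * k.-1 + exit_pos s k.-1.
Proof. by case: k => [|[|k]] // _; rewrite /spiro_cut /exit_pos /hop /= subn2. Qed.

Lemma spiro_hv_exit s k : spiro_hv s k (exit_pos s k) = spiro_hv s k.+1 0.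
Proof.
rewrite [RHS]/spiro_hv /= spiro_cut_exit //= /spiro_hv mulnC.
case: eqP => [-> | k0] //; rewrite exit_pos_hop; last lia.
by have /andP[] := hop_bounds s k; case: hop.
Qed.

Lemma spiro_hv_lt s n k j : k < n -> j < 6 -> spiro_hv s k j < 5 * n + 1.
Proof.
move=> kn j6; rewrite /spiro_hv; case: eqP => k0; first lia.
case: eqP => j0; last lia.
by rewrite spiro_cut_exit; [have := exit_pos_le3 s k.-1 | ]; lia.
Qed.

Lemma spiro_hv_blk_pos s x : spiro_hv s (blk x) (pos x) = x.
Proof. by rewrite /spiro_hv /pos /blk; case: eqP => h; [|case: eqP]; lia. Qed.

Lemma pos_lt6 x : pos x < 6.
Proof. by rewrite /pos /blk; lia. Qed.

Lemma pos_gt0 x : 0 < blk x -> 0 < pos x.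
Proof. by rewrite /pos /blk; lia. Qed.

Lemma blk_lt n x : 0 < n -> x < 5 * n + 1 -> blk x < n.
Proof. by rewrite /blk; lia. Qed.

Lemma blk_pos_inner k r : 0 < k -> 0 < r <= 5 -> blk (5 * k + r) = k /\ pos (5 * k + r) = r.
Proof. by rewrite /pos /blk; lia. Qed.

Lemma blk_pos_hv s k j : j < 6 -> (k == 0) || (0 < j) ->
  blk (spiro_hv s k j) = k /\ pos (spiro_hv s k j) = j.
Proof.
rewrite /spiro_hv /pos /blk => j6; case: eqP => [-> | k0] /= j0; first lia.
by rewrite (_ : (j == 0) = false); [lia | apply/eqP; lia].
Qed.

Lemma blk_pos_cut s k : 0 < k ->
  blk (spiro_cut s k) = k.-1 /\ pos (spiro_cut s k) = exit_pos s k.-1.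
Proof.
move=> k0; rewrite spiro_cut_exit //.
have := exit_pos_le3 s k.-1.
have : (k.-1 == 0) || (0 < exit_pos s k.-1).
  by case: eqP => //= h; rewrite exit_pos_hop; [have /andP[] := hop_bounds s k.-1 | lia].
by rewrite /pos /blk; case: eqP => [-> | h]; [rewrite /exit_pos /= | ]; lia.
Qed.

Lemma spiro_dist_hv s k j y : j < 6 ->
  spiro_dist s (spiro_hv s k j) y = hex_dist s k j (blk y) (pos y).
Proof.
move=> j6; case: (boolP ((k == 0) || (0 < j))) => kj.
  by rewrite /spiro_dist; have [-> ->] := blk_pos_hv s j6 kj.
have [k0 j0] : 0 < k /\ j = 0 by move: kj; rewrite negb_or -leqNgt; lia.
have -> : spiro_hv s k j = spiro_cut s k by rewrite /spiro_hv j0 (_ : (k == 0) = false) //; lia.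
by rewrite /spiro_dist; have [-> ->] := blk_pos_cut s k0; rewrite j0 hex_dist_exit.
Qed.

Lemma spiro_distC s x y : spiro_dist s x y = spiro_dist s y x.
Proof. exact: hex_distC. Qed.

Lemma spiro_dist_hvr s x k j : j < 6 ->
  spiro_dist s x (spiro_hv s k j) = hex_dist s k j (blk x) (pos x).
Proof. by move=> j6; rewrite spiro_distC spiro_dist_hv. Qed.

Lemma spiro_adjP n s u v : spiro_adj_nat n s u v -> exists k j, k < n /\ j < 6 /\
  ((u = spiro_hv s k j /\ v = spiro_hv s k (j.+1 %% 6)) \/
   (u = spiro_hv s k (j.+1 %% 6) /\ v = spiro_hv s k j)).
Proof.
case/hasP => k; rewrite mem_iota add0n => /andP[_ kn].
case/hasP => j; rewrite mem_iota add0n => /andP[_ j6].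
by case/orP => /andP[/eqP -> /eqP ->]; exists k, j; do 2 split => //; [left | right].
Qed.

Lemma spiro_adj_hv n s k j u v : k < n -> j < 6 ->
  ((u = spiro_hv s k j /\ v = spiro_hv s k (j.+1 %% 6)) \/
   (u = spiro_hv s k (j.+1 %% 6) /\ v = spiro_hv s k j)) ->
  spiro_adj_nat n s u v.
Proof.
move=> kn j6 uv; apply/hasP; exists k; first by rewrite mem_iota.
apply/hasP; exists j; first by rewrite mem_iota.
by case: uv => [[-> ->]|[-> ->]] /=; rewrite !eqxx ?orbT.
Qed.

Lemma hex_dist_succ s k j i q : j < 6 -> q < 6 ->
  hex_dist s k (j.+1 %% 6) i q <= (hex_dist s k j i q).+1 /\
  hex_dist s k j i q <= (hex_dist s k (j.+1 %% 6) i q).+1.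
Proof.
move=> j6 q6; rewrite /hex_dist; case: (ltngtP k i) => _.
- have e6 : exit_pos s k < 6 by have := exit_pos_le3 s k; lia.
  by have [] := hexd_succ e6 j6; rewrite !(hexdC _ (exit_pos s k)); lia.
- by have [] := hexd_succ (isT : 0 < 6) j6; lia.
- by have [] := hexd_succ q6 j6; rewrite !(hexdC q); lia.
Qed.

Lemma spiro_dist_lip n s x a b :
  spiro_adj_nat n s a b -> spiro_dist s x b <= (spiro_dist s x a).+1.
Proof.
case/spiro_adjP => k [j [kn [j6 ab]]].
have j'6 : j.+1 %% 6 < 6 by rewrite ltn_mod.
have [le1 le2] := hex_dist_succ s k (blk x) j6 (pos_lt6 x).
by case: ab => [[-> ->]|[-> ->]]; rewrite !spiro_dist_hvr.
Qed.

Lemma mod6_predK j : j < 6 -> ((j + 5) %% 6).+1 %% 6 = j.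
Proof. by case6 j. Qed.

Section Descent.

Variables (n : nat) (s : seq ctype) (x : nat).

Definition has_closer_nbr (y : nat) : Prop := exists2 w, w < 5 * n + 1 &
  spiro_adj_nat n s w y /\ (spiro_dist s x w).+1 = spiro_dist s x y.

(* Walk around H_K towards position c. *)
Lemma hexagon_descent K J c A : K < n -> J < 6 -> c < 6 ->
  (forall j, j < 6 -> hex_dist s K j (blk x) (pos x) = A + hexd c j) ->
  0 < hexd c J -> has_closer_nbr (spiro_hv s K J).
Proof.
move=> Kn J6 c6 dist_K cJ.
have J1 : J.+1 %% 6 < 6 by rewrite ltn_mod.
have J5 : (J + 5) %% 6 < 6 by rewrite ltn_mod.
case: (hexd_descent c6 J6 cJ) => closer.
- exists (spiro_hv s K (J.+1 %% 6)); first exact: spiro_hv_lt.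
  split; first by apply: (spiro_adj_hv (k := K) (j := J)) => //; right; split.
  by rewrite !spiro_dist_hvr // !dist_K // -closer addnS.
- exists (spiro_hv s K ((J + 5) %% 6)); first exact: spiro_hv_lt.
  split; first by apply: (spiro_adj_hv (k := K) (j := (J + 5) %% 6)) => //; left; rewrite mod6_predK.
  by rewrite !spiro_dist_hvr // !dist_K //; lia.
Qed.

Lemma descent_same_hexagon J : blk x < n -> J < 6 ->
  0 < hex_dist s (blk x) J (blk x) (pos x) -> has_closer_nbr (spiro_hv s (blk x) J).
Proof.
move=> xn J6; rewrite /hex_dist eqxx hexdC => pos_dist.
apply: (hexagon_descent (c := pos x) (A := 0)) => //; first exact: pos_lt6.
by move=> j _; rewrite /hex_dist eqxx hexdC.
Qed.

Lemma descent_later_hexagon K J : blk x < K < n -> 0 < J < 6 ->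
  has_closer_nbr (spiro_hv s K J).
Proof.
move=> /andP[xK Kn] /andP[J0 J6].
apply: (hexagon_descent (c := 0) (A := hexd (pos x) (exit_pos s (blk x)) + hops s (blk x).+1 K)) => //.
  move=> j _; rewrite /hex_dist; case: (ltngtP K (blk x)) => h; lia.
by rewrite /hexd leq0n subn0; lia.
Qed.

Lemma descent_earlier_hexagon K J : K < blk x < n -> J < 6 ->
  has_closer_nbr (spiro_hv s K J).
Proof.
move=> /andP[Kx xn] J6.
have dist_from c K' : K' < blk x -> c = exit_pos s K' -> forall j, j < 6 ->
    hex_dist s K' j (blk x) (pos x) = hops s K'.+1 (blk x) + hexd 0 (pos x) + hexd c j.
  by move=> K'x -> j _; rewrite /hex_dist; case: (ltngtP K' (blk x)); rewrite 1?hexdC; lia.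
have exit6 K' : exit_pos s K' < 6 by have := exit_pos_le3 s K'; lia.
case: (eqVneq J (exit_pos s K)) => [-> | Jexit]; last first.
  apply: hexagon_descent (dist_from _ _ Kx erefl) _ => //; first lia.
  by rewrite lt0n; apply: contra Jexit => /eqP/hexd_eq0 -> //.
rewrite spiro_hv_exit; case: (ltngtP K.+1 (blk x)) => [Sx | | Sx]; last first.
- rewrite Sx; apply: descent_same_hexagon; rewrite // /hex_dist eqxx.
  by have := @pos_gt0 x; have := pos_lt6 x; rewrite /hexd leq0n subn0; lia.
- by move=> ?; lia.
- apply: hexagon_descent (dist_from _ _ Sx erefl) _ => //; first lia.
  by rewrite hexdC hexd0n ?exit_pos_le3 // exit_pos_hop //; have /andP[] := hop_bounds s K.+1.
Qed.

End Descent.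

Lemma spiro_dist_descent n s x y : 0 < n -> x < 5 * n + 1 -> y < 5 * n + 1 ->
  0 < spiro_dist s x y -> has_closer_nbr n s x y.
Proof.
move=> n0 xn yn; have xN := blk_lt n0 xn; have yN := blk_lt n0 yn.
rewrite -(spiro_hv_blk_pos s y) spiro_dist_hvr ?pos_lt6 //.
case: (ltngtP (blk y) (blk x)) => [yx | xy | ->] dist_pos.
- by apply: descent_earlier_hexagon; rewrite ?yx ?pos_lt6.
- by apply: descent_later_hexagon; rewrite ?xy ?pos_lt6 ?pos_gt0 //; lia.
- by apply: descent_same_hexagon; rewrite ?pos_lt6 // hex_distC.
Qed.

Lemma spiro_dist_refl s x : spiro_dist s x x = 0.
Proof. by rewrite /spiro_dist /hex_dist eqxx hexdd. Qed.

Lemma spiro_dist_eq0 s x y : spiro_dist s x y = 0 -> x = y.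
Proof.
rewrite /spiro_dist /hex_dist.
have := pos_lt6 x; have := pos_lt6 y; have := @pos_gt0 x; have := @pos_gt0 y.
case: (ltngtP (blk x) (blk y)) => h py px y6 x6.
- by have := py (leq_trans (ltn0Sn _) h); rewrite /hexd leq0n subn0; lia.
- by have := px (leq_trans (ltn0Sn _) h); rewrite /hexd leq0n subn0; lia.
- by move/hexd_eq0 => pxy; rewrite -(spiro_hv_blk_pos s x) -(spiro_hv_blk_pos s y) h pxy.
Qed.

Lemma gdist_spiro n s (u v : 'I_(5 * n + 1)) : 0 < n ->
  gdist (spiro_chain n s) u v = spiro_dist s u v.
Proof.
move=> n0; apply: (gdist_potential (f := fun y : 'I_(5 * n + 1) => spiro_dist s u y)).
- exact: spiro_dist_refl.
- by move=> y /spiro_dist_eq0 uy; apply/val_inj.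
- by move=> a b; exact: spiro_dist_lip.
- move=> y /(spiro_dist_descent n0 (ltn_ord u) (ltn_ord y)) [w wn [wy closer]].
  by exists (Ordinal wn).
- have := hex_dist_le s (pos u) (pos v) (blk_lt n0 (ltn_ord u)) (blk_lt n0 (ltn_ord v)).
  by rewrite card_ord /spiro_dist; lia.
Qed.

(** * The Wiener index *)

(* The first 5k+1 vertices are exactly those of H_0, ..., H_{k-1}, so
   [pair_sum s (5k+1)] is the Wiener index of that subchain. *)
Definition pair_sum (s : seq ctype) (N : nat) : nat :=
  \sum_(u < N) \sum_(v < N | u < v) spiro_dist s u v.

Definition col_sum (s : seq ctype) (v : nat) : nat := \sum_(u < v) spiro_dist s u v.

Definition cut_sum (s : seq ctype) (k : nat) : nat :=
  \sum_(u < 5 * k + 1) spiro_dist s u (spiro_hv s k 0).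

Definition hop_moment (s : seq ctype) (k : nat) : nat := \sum_(i < k) i * hop s i.

Definition wiener_offset (n : nat) : nat := \sum_(i < n) (90 * i + 27).

Lemma pair_sumS s N : pair_sum s N.+1 = pair_sum s N + col_sum s N.
Proof.
rewrite /pair_sum big_ord_recr /= [X in _ + X = _]big_pred0; last first.
  by move=> v /=; rewrite ltnNge -ltnS ltn_ord.
rewrite addn0 /col_sum -big_split /=; apply: eq_bigr => u _.
by rewrite big_mkcond big_ord_recr /= -big_mkcond /= ltn_ord.
Qed.

Lemma pair_sumD s m k : pair_sum s (m + k) = pair_sum s m + \sum_(t < k) col_sum s (m + t).
Proof.
elim: k => [|k IHk]; first by rewrite addn0 big_ord0 addn0.
by rewrite addnS pair_sumS IHk big_ord_recr /= addnA.
Qed.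

(* Old vertices reach the new hexagon H_k through its cut vertex c_k. *)
Lemma spiro_dist_through_cut s k u r : 0 < k -> u < 5 * k + 1 -> 0 < r <= 5 ->
  spiro_dist s u (5 * k + r) = spiro_dist s u (spiro_hv s k 0) + hexd 0 r.
Proof.
move=> k0 uk rk; rewrite spiro_dist_hvr // /spiro_dist.
have [-> ->] := blk_pos_inner k0 rk; have uk' := blk_lt k0 uk.
by rewrite /hex_dist; case: (ltngtP (blk u) k) => h; rewrite ?hexdd ?addn0; lia.
Qed.

Lemma spiro_dist_inner s k r r' : 0 < k -> 0 < r <= 5 -> 0 < r' <= 5 ->
  spiro_dist s (5 * k + r) (5 * k + r') = hexd r r'.
Proof.
move=> k0 rk r'k; rewrite /spiro_dist.
by have [-> ->] := blk_pos_inner k0 rk; have [-> ->] := blk_pos_inner k0 r'k; rewrite /hex_dist eqxx.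
Qed.

Lemma cut_sumS s k : 0 < k -> cut_sum s k.+1 = cut_sum s k + 5 * k * hop s k + 9.
Proof.
move=> k0; rewrite /cut_sum (_ : 5 * k.+1 + 1 = (5 * k + 1) + 5); last lia.
rewrite big_split_ord /=.
rewrite (eq_bigr (fun u : 'I_(5 * k + 1) => spiro_dist s u (spiro_hv s k 0) + hop s k)); last first.
  move=> u _; rewrite !spiro_dist_hvr //; have uk := blk_lt k0 (ltn_ord u).
  rewrite /hex_dist; case: (ltngtP (blk u) k) => h; try lia.
  case: (ltngtP (blk u) k.+1) => h'; try lia.
  by rewrite (hops_recr s (_ : (blk u).+1 <= k)) // !hexdd; lia.
rewrite big_split /= sum_nat_const card_ord !big_ord_recr big_ord0 /=.
have new_vertex r : 0 < r <= 5 ->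
    spiro_dist s (5 * k + 1 + r.-1) (spiro_hv s k.+1 0) = hexd r (hop s k).
  move=> rk; rewrite (_ : 5 * k + 1 + r.-1 = 5 * k + r); last lia.
  rewrite spiro_dist_hvr // /spiro_dist; have [-> ->] := blk_pos_inner k0 rk.
  rewrite /hex_dist; case: (ltngtP k.+1 k) => h; try lia.
  by rewrite hops_nil exit_pos_hop // hexdd !addn0 hexdC.
rewrite (new_vertex 1) // (new_vertex 2) // (new_vertex 3) // (new_vertex 4) // (new_vertex 5) //.
by have := hop_bounds s k; case: (hop s k) => [|[|[|[|t]]]] //= _; rewrite /hexd /=; lia.
Qed.

Lemma col_sum_block s k r : 0 < k -> r < 5 ->
  col_sum s (5 * k + 1 + r) =
  cut_sum s k + (5 * k + 1) * hexd 0 r.+1 + \sum_(t < r) hexd t.+1 r.+1.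
Proof.
move=> k0 r5; rewrite /col_sum big_split_ord /= (_ : 5 * k + 1 + r = 5 * k + r.+1); last lia.
rewrite (eq_bigr (fun u : 'I_(5 * k + 1) => spiro_dist s u (spiro_hv s k 0) + hexd 0 r.+1)); last first.
  by move=> u _; apply: spiro_dist_through_cut => //; lia.
rewrite big_split /= sum_nat_const card_ord -/(cut_sum s k) mulnC; congr (_ + _).
apply: eq_bigr => t _; rewrite (_ : 5 * k + 1 + t = 5 * k + t.+1); last lia.
by apply: spiro_dist_inner => //; have := ltn_ord t; lia.
Qed.

Lemma pair_sum_block s k : 0 < k ->
  pair_sum s (5 * k.+1 + 1) = pair_sum s (5 * k + 1) + 5 * cut_sum s k + 45 * k + 27.
Proof.
move=> k0; rewrite (_ : 5 * k.+1 + 1 = (5 * k + 1) + 5); last lia.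
rewrite pair_sumD !big_ord_recr big_ord0 /= !col_sum_block // !big_ord_recr !big_ord0 /=.
rewrite (_ : hexd 0 1 = 1) // (_ : hexd 0 2 = 2) // (_ : hexd 0 3 = 3) // (_ : hexd 0 4 = 2) //.
rewrite (_ : hexd 0 5 = 1) // (_ : hexd 1 2 = 1) // (_ : hexd 1 3 = 2) // (_ : hexd 2 3 = 1) //.
rewrite (_ : hexd 1 4 = 3) // (_ : hexd 2 4 = 2) // (_ : hexd 3 4 = 1) // (_ : hexd 1 5 = 2) //.
by rewrite (_ : hexd 2 5 = 3) // (_ : hexd 3 5 = 2) // (_ : hexd 4 5 = 1) //; lia.
Qed.

Lemma cut_sum1 s : cut_sum s 1 = 9.
Proof. by rewrite /cut_sum /= !big_ord_recr big_ord0. Qed.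

Lemma pair_sum6 s : pair_sum s 6 = 27.
Proof.
rewrite (_ : 6 = 0 + 6) // pair_sumD /pair_sum big_ord0 add0n.
by rewrite !big_ord_recr big_ord0 /= /col_sum !big_ord_recr !big_ord0.
Qed.

Lemma cut_sum_moment s k : 0 < k -> cut_sum s k = 5 * hop_moment s k + 9 * k.
Proof.
elim: k => [//|[|k] IHk] _; first by rewrite cut_sum1 /hop_moment big_ord_recr big_ord0.
by rewrite cut_sumS // IHk // /hop_moment (big_ord_recr k.+1) /=; nia.
Qed.

Lemma pair_sum_moment s k : 0 < k ->
  pair_sum s (5 * k + 1) = 25 * \sum_(i < k) hop_moment s i + wiener_offset k.
Proof.
elim: k => [//|[|k] IHk] _.
  by rewrite pair_sum6 /wiener_offset !big_ord_recr !big_ord0 /= /hop_moment big_ord0.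
rewrite pair_sum_block // IHk // cut_sum_moment // /wiener_offset (big_ord_recr k.+1) /=.
by rewrite [\sum_(i < k.+2) _]big_ord_recr /=; lia.
Qed.

Lemma sum_hop_moment s k :
  \sum_(i < k) hop_moment s i = \sum_(i < k) i * (k.-1 - i) * hop s i.
Proof.
elim: k => [|k IHk]; first by rewrite !big_ord0.
rewrite big_ord_recr /= IHk /hop_moment [RHS]big_ord_recr /= subnn muln0 mul0n addn0.
rewrite -big_split /=; apply: eq_bigr => i _.
have := ltn_ord i; case: k {IHk} i => [[] // | k] i ik /=.
by rewrite -mulnDl subSn // mulnS addnC.
Qed.

Lemma spiro_W_moment n s : 0 < n ->
  spiro_W n s = 25 * \sum_(i < n) i * (n.-1 - i) * hop s i + wiener_offset n.
Proof.
move=> n0; rewrite -sum_hop_moment -pair_sum_moment // /spiro_W /wiener /pair_sum.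
by apply: eq_bigr => u _; apply: eq_bigr => v _; exact: gdist_spiro.
Qed.

(** * Isomorphisms *)

Lemma spiro_W_iso n s t : 0 < n -> spiro_iso n s t -> spiro_W n s = spiro_W n t.
Proof.
by move=> n0; apply: wiener_graph_iso => u v; rewrite !gdist_spiro // spiro_distC.
Qed.

Lemma spiro_iso_refl n s : spiro_iso n s s.
Proof. by exists 1%g => x y; rewrite !perm1. Qed.

(* Reversing the chain maps H_k onto H_{n-1-k}, reflecting it so that its exit
   cut vertex becomes the entry of the image; the last hexagon has no exit and
   is reflected through vertex 0. *)
Definition mirror_exit (s : seq ctype) (n k : nat) : nat :=
  if k == n.-1 then 0 else exit_pos s k.

Definition mirror (s : seq ctype) (n x : nat) : nat :=
  spiro_hv (rev s) (n.-1 - blk x) ((mirror_exit s n (blk x) + 6 - pos x) %% 6).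

Lemma mirror_exit_le3 s n k : mirror_exit s n k <= 3.
Proof. by rewrite /mirror_exit; case: eqP => // _; exact: exit_pos_le3. Qed.

Lemma hop_rev s n k : size s = n - 2 -> 0 < k <= n - 2 -> hop (rev s) k = hop s (n.-1 - k).
Proof. by move=> sz /andP[k0 kn]; rewrite /hop nth_rev; [congr (ctype_dist (nth _ _ _)) |]; lia. Qed.

Lemma mirror_exit_rev s n k : size s = n - 2 -> k < n ->
  mirror_exit (rev s) n (n.-1 - k) = mirror_exit s n k.
Proof.
move=> sz kn; rewrite /mirror_exit.
case: (eqVneq k 0) => [-> | k0]; first by rewrite subn0 eqxx; case: eqP.
case: (eqVneq k n.-1) => [-> | kn1]; first by rewrite subnn; case: eqP.
rewrite (_ : (n.-1 - k == n.-1) = false); last by apply/eqP; lia.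
by rewrite !exit_pos_hop ?(hop_rev sz); [congr hop | ..]; lia.
Qed.

Lemma mirror_hv s n k j : size s = n - 2 -> k < n -> j < 6 ->
  mirror s n (spiro_hv s k j) = spiro_hv (rev s) (n.-1 - k) ((mirror_exit s n k + 6 - j) %% 6).
Proof.
move=> sz kn j6; rewrite /mirror.
case: (boolP ((k == 0) || (0 < j))) => kj; first by have [-> ->] := blk_pos_hv s j6 kj.
have [k0 j0] : 0 < k /\ j = 0 by move: kj; rewrite negb_or -leqNgt; lia.
have -> : spiro_hv s k j = spiro_cut s k by rewrite /spiro_hv j0 (_ : (k == 0) = false) //; lia.
have [-> ->] := blk_pos_cut s k0.
rewrite (_ : mirror_exit s n k.-1 = exit_pos s k.-1); last by rewrite /mirror_exit; case: eqP; lia.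
rewrite addnC addnK modnn (_ : n.-1 - k.-1 = (n.-1 - k).+1); last lia.
rewrite -spiro_hv_exit j0 subn0 modnDr modn_small; last by have := mirror_exit_le3 s n k; lia.
rewrite -(mirror_exit_rev sz kn) /mirror_exit.
by case: eqP => // e; rewrite (_ : n.-1 - k = 0) //; lia.
Qed.

Lemma mod6_reflect_succ r j : r < 6 -> j < 6 ->
  ((r + 6 - (j.+1 %% 6)) %% 6).+1 %% 6 = (r + 6 - j) %% 6.
Proof. by case6 r; case6 j. Qed.

Lemma mod6_reflectK r j : r < 6 -> j < 6 -> (r + 6 - (r + 6 - j) %% 6) %% 6 = j.
Proof. by case6 r; case6 j. Qed.

Lemma mirror_adj s n x y : size s = n - 2 -> spiro_adj_nat n s x y ->
  spiro_adj_nat n (rev s) (mirror s n x) (mirror s n y).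
Proof.
move=> sz /spiro_adjP [k [j [kn [j6 xy]]]].
have j'6 : j.+1 %% 6 < 6 by rewrite ltn_mod.
have r6 : mirror_exit s n k < 6 by have := mirror_exit_le3 s n k; lia.
apply: (spiro_adj_hv (k := n.-1 - k) (j := (mirror_exit s n k + 6 - j.+1 %% 6) %% 6));
  rewrite ?ltn_mod //; first lia.
by case: xy => [[-> ->]|[-> ->]]; rewrite !mirror_hv // (mod6_reflect_succ r6 j6); by [right | left].
Qed.

Lemma mirrorK s n x : size s = n - 2 -> 0 < n -> x < 5 * n + 1 -> mirror (rev s) n (mirror s n x) = x.
Proof.
move=> sz n0 xn; have kn := blk_lt n0 xn; have j6 := pos_lt6 x.
have r6 : mirror_exit s n (blk x) < 6 by have := mirror_exit_le3 s n (blk x); lia.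
rewrite [mirror s n x]/mirror mirror_hv ?size_rev ?ltn_mod //; last lia.
rewrite revK mirror_exit_rev // (_ : n.-1 - (n.-1 - blk x) = blk x); last lia.
by rewrite mod6_reflectK // spiro_hv_blk_pos.
Qed.

Lemma spiro_iso_rev n s : 0 < n -> size s = n - 2 -> spiro_iso n s (rev s).
Proof.
move=> n0 sz.
have mirror_lt x : mirror s n x < 5 * n + 1 by apply: spiro_hv_lt; rewrite ?ltn_mod //; lia.
pose f (x : 'I_(5 * n + 1)) : 'I_(5 * n + 1) := Ordinal (mirror_lt x).
have f_inj : injective f.
  move=> x y /(congr1 val) /= /(congr1 (mirror (rev s) n)).
  by rewrite !mirrorK // => /val_inj.
exists (perm f_inj) => x y; rewrite !permE /spiro_chain /=.
apply/idP/idP; first exact: mirror_adj.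
have sz' : size (rev s) = n - 2 by rewrite size_rev.
by move/(mirror_adj sz'); rewrite revK !mirrorK.
Qed.

(** * Comparing cut-vertex sequences *)

Definition wt (m j : nat) : nat := j.+1 * (m - j).

Definition excess (s : seq ctype) : nat :=
  \sum_(j < size s) wt (size s) j * (ctype_dist (nth Ortho s j) - 1).

Lemma sum_moment_wt s :
  \sum_(i < (size s).+2) i * ((size s).+2.-1 - i) * hop s i =
  \sum_(j < size s) wt (size s) j * ctype_dist (nth Ortho s j).
Proof.
rewrite big_ord_recl /= mul0n add0n big_ord_recr /= subnn muln0 mul0n addn0.
by apply: eq_bigr => j _; rewrite /wt /hop /bump /= add0n add1n subSS.
Qed.

Lemma spiro_W_wt n s : 2 <= n -> size s = n - 2 ->
  spiro_W n s = 25 * (\sum_(j < n - 2) wt (n - 2) j + excess s) + wiener_offset n.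
Proof.
move=> n2 sz; have -> : n = (size s).+2 by lia.
rewrite spiro_W_moment // sum_moment_wt subn2 /= /excess -big_split /=.
congr (25 * _ + _); apply: eq_bigr => j _.
have : 1 <= ctype_dist (nth Ortho s j) by case: nth.
by rewrite /wt; nia.
Qed.

Lemma excess_nseq_ortho m : excess (nseq m Ortho) = 0.
Proof. by rewrite /excess big1 // => j _; rewrite nth_nseq; case: ifP; rewrite muln0. Qed.

Lemma spiro_W_excess n s : 2 <= n -> size s = n - 2 ->
  spiro_W n s = spiro_W n (seq_ortho n) + 25 * excess s.
Proof.
move=> n2 sz; rewrite !spiro_W_wt ?size_nseq // excess_nseq_ortho; lia.
Qed.

Definition meta_only (s : seq ctype) (k : nat) : Prop :=
  nth Ortho s k = Meta /\ forall i, i < size s -> i != k -> nth Ortho s i = Ortho.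

Lemma wt_ge m k : k < m -> m <= wt m k.
Proof. by rewrite /wt; nia. Qed.

Lemma excess_ge1 s i : i < size s -> wt (size s) i * (ctype_dist (nth Ortho s i) - 1) <= excess s.
Proof. by move=> im; rewrite /excess (bigD1 (Ordinal im)) //= leq_addr. Qed.

Lemma excess_ge2 s i j : i < size s -> j < size s -> i != j ->
  wt (size s) i * (ctype_dist (nth Ortho s i) - 1) +
  wt (size s) j * (ctype_dist (nth Ortho s j) - 1) <= excess s.
Proof.
move=> im jm ij; rewrite /excess (bigD1 (Ordinal im)) //= (bigD1 (Ordinal jm)) /=.
  by rewrite addnA leq_addr.
by rewrite -(inj_eq val_inj) /= eq_sym.
Qed.

Lemma excess_meta_only s k : k < size s -> meta_only s k -> excess s = wt (size s) k.
Proof.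
move=> km [sk s_ortho]; rewrite /excess (bigD1 (Ordinal km)) //= sk muln1 big1 ?addn0 //.
by move=> i /= ik; rewrite s_ortho // muln0.
Qed.

Lemma ctype_dist1 c : ctype_dist c = 1 -> c = Ortho.
Proof. by case: c. Qed.

Lemma nseq_ortho_neq s : s <> nseq (size s) Ortho ->
  exists2 i, i < size s & 1 < ctype_dist (nth Ortho s i).
Proof.
move=> s_neq; case: (boolP [exists i : 'I_(size s), 1 < ctype_dist (nth Ortho s i)]).
  by case/existsP => i; exists i.
move/existsPn => s_ortho; case: s_neq; apply: (eq_from_nth (x0 := Ortho)); first by rewrite size_nseq.
move=> i im; rewrite nth_nseq im; apply: ctype_dist1.
by have := s_ortho (Ordinal im); case: nth.
Qed.

Lemma excess_pos s : s <> nseq (size s) Ortho -> 0 < excess s.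
Proof.
case/nseq_ortho_neq => i im di; apply: leq_trans (excess_ge1 im).
by have := wt_ge im; rewrite muln_gt0; lia.
Qed.

Lemma excess_small_meta_only s : s <> nseq (size s) Ortho -> excess s < 2 * size s ->
  exists2 k, k < size s & meta_only s k.
Proof.
move=> s_neq small; have [k km dk] := nseq_ortho_neq s_neq.
have only_k i : i < size s -> i != k -> nth Ortho s i = Ortho.
  move=> im ik; apply: ctype_dist1; have := excess_ge2 im km ik.
  have := wt_ge im; have := wt_ge km; case: (nth Ortho s i) => /=; nia.
exists k => //; split => //.
have := excess_ge1 km; have := wt_ge km; move: dk; case: (nth Ortho s k) => //=; nia.
Qed.

Lemma meta_only_eq s t k : size s = size t -> k < size s ->
  meta_only s k -> meta_only t k -> s = t.
Proof.
move=> st km [sk s_ortho] [tk t_ortho]; apply: (eq_from_nth (x0 := Ortho)) => // i im.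
by case: (eqVneq i k) => [-> | ik]; rewrite ?sk ?tk // s_ortho // t_ortho // -st.
Qed.

Lemma meta_only_rev t k : k < size t -> meta_only t k -> meta_only (rev t) (size t - k.+1).
Proof.
move=> km [tk t_ortho]; split.
  by rewrite nth_rev; [rewrite (_ : size t - (size t - k.+1).+1 = k) //; lia | lia].
move=> i; rewrite size_rev => im ik; rewrite nth_rev // t_ortho //; first lia.
by apply: contra ik => /eqP ik; apply/eqP; lia.
Qed.

(* Reversal moves the only meta cut vertex from k to m - 1 - k (m = n - 2). *)
Lemma spiro_iso_meta_only n s t k k' : 0 < n -> size s = n - 2 -> size t = n - 2 ->
  k < n - 2 -> k' < n - 2 -> meta_only s k -> meta_only t k' ->
  k' = k \/ k' = n - 3 - k -> spiro_iso n s t.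
Proof.
move=> n0 sz tz km k'm sk tk' [k'k | k'_rev].
  by subst k'; rewrite (meta_only_eq _ _ sk tk') ?sz ?tz //; exact: spiro_iso_refl.
have trev : meta_only (rev t) k.
  by have := meta_only_rev (_ : k' < size t) tk'; rewrite tz (_ : n - 2 - k'.+1 = k); [apply; lia | lia].
rewrite (meta_only_eq _ _ sk trev) ?size_rev ?sz ?tz //.
by have := spiro_iso_rev n0 (_ : size (rev t) = n - 2); rewrite revK; apply; rewrite size_rev.
Qed.

Lemma wt_le_size m k : k < m -> wt m k <= m -> k = 0 \/ k = m - 1.
Proof. by rewrite /wt; nia. Qed.

Lemma wt_le_2size m k : k < m -> wt m k <= 2 * (m - 1) ->
  (k = 0 \/ k = m - 1) \/ (k = 1 \/ k = m - 2).
Proof. by rewrite /wt; nia. Qed.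

Lemma meta_only_second n : 3 <= n -> meta_only (seq_second n) (n - 3).
Proof.
move=> n3; rewrite /meta_only /seq_second size_rcons size_nseq nth_rcons size_nseq ltnn eqxx.
split => // i im ik; rewrite nth_rcons size_nseq nth_nseq.
by case: ltnP => // _; rewrite ifF //; apply/negbTE.
Qed.

Lemma meta_only_third n : 4 <= n -> meta_only (seq_third n) (n - 4).
Proof.
move=> n4; rewrite /meta_only /seq_third !size_rcons size_nseq.
rewrite nth_rcons size_rcons size_nseq ltnSn nth_rcons size_nseq ltnn eqxx.
split => // i im ik; rewrite !nth_rcons size_rcons size_nseq nth_nseq.
by case: ltnP => _; [case: ltnP => // _; rewrite ifF //; apply/negbTE | case: eqP].
Qed.

Lemma size_seq_second n : 3 <= n -> size (seq_second n) = n - 2.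
Proof. by rewrite size_rcons size_nseq; lia. Qed.

Lemma size_seq_third n : 4 <= n -> size (seq_third n) = n - 2.
Proof. by rewrite !size_rcons size_nseq; lia. Qed.

Lemma spiro_W_second n : 3 <= n ->
  spiro_W n (seq_second n) = spiro_W n (seq_ortho n) + 25 * (n - 2).
Proof.
move=> n3; have sz := size_seq_second n3.
by rewrite spiro_W_excess ?(excess_meta_only _ (meta_only_second n3)) ?sz /wt //; lia.
Qed.

Lemma spiro_W_third n : 4 <= n ->
  spiro_W n (seq_third n) = spiro_W n (seq_ortho n) + 25 * (2 * (n - 3)).
Proof.
move=> n4; have sz := size_seq_third n4.
by rewrite spiro_W_excess ?(excess_meta_only _ (meta_only_third n4)) ?sz /wt //; lia.
Qed.

Lemma spiro_iso_second n s k : 3 <= n -> size s = n - 2 -> k < n - 2 -> meta_only s k ->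
  k = 0 \/ k = n - 3 -> spiro_iso n s (seq_second n).
Proof.
move=> n3 sz km sk k_end.
by apply: (spiro_iso_meta_only _ sz (size_seq_second n3) km _ sk (meta_only_second n3)); lia.
Qed.

Lemma spiro_iso_third n s k : 4 <= n -> size s = n - 2 -> k < n - 2 -> meta_only s k ->
  k = 1 \/ k = n - 4 -> spiro_iso n s (seq_third n).
Proof.
move=> n4 sz km sk k_end.
by apply: (spiro_iso_meta_only _ sz (size_seq_third n4) km _ sk (meta_only_third n4)); lia.
Qed.

Lemma not_iso_ortho_nseq n s : size s = n - 2 -> ~ spiro_iso n s (seq_ortho n) ->
  s <> nseq (size s) Ortho.
Proof. by move=> sz s_niso s_ortho; apply: s_niso; rewrite s_ortho sz; exact: spiro_iso_refl. Qed.

Lemma excess_le_meta_only n s K : size s = n - 2 -> ~ spiro_iso n s (seq_ortho n) ->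
  excess s <= K -> K < 2 * (n - 2) -> exists2 k, k < n - 2 & meta_only s k /\ wt (n - 2) k <= K.
Proof.
move=> sz s_niso sK K2.
have [|k km sk] := excess_small_meta_only (not_iso_ortho_nseq sz s_niso); first by rewrite sz; lia.
by exists k; rewrite -sz //; split; rewrite // -(excess_meta_only km sk).
Qed.

Theorem theorem2p4 (n : nat) (hn : (4 <= n)%N) :
  (forall s : seq ctype, size s = (n - 2)%N ->
     ~ spiro_iso n s (seq_ortho n) ->
     (spiro_W n (seq_ortho n) < spiro_W n s)%N) /\
  (~ spiro_iso n (seq_second n) (seq_ortho n) /\
   forall s : seq ctype, size s = (n - 2)%N ->
     ~ spiro_iso n s (seq_ortho n) -> ~ spiro_iso n s (seq_second n) ->
     (spiro_W n (seq_second n) < spiro_W n s)%N) /\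
  ((5 <= n)%N ->
   ~ spiro_iso n (seq_third n) (seq_ortho n) /\
   ~ spiro_iso n (seq_third n) (seq_second n) /\
   forall s : seq ctype, size s = (n - 2)%N ->
     ~ spiro_iso n s (seq_ortho n) -> ~ spiro_iso n s (seq_second n) ->
     ~ spiro_iso n s (seq_third n) ->
     (spiro_W n (seq_third n) < spiro_W n s)%N).
Proof.
have [n0 n2 n3] : [/\ 0 < n, 2 <= n & 3 <= n] by split; lia.
have W2 := spiro_W_second n3; have W3 := spiro_W_third hn.
split; [|split; [split|]].
- move=> s sz /(not_iso_ortho_nseq sz)/excess_pos; rewrite (spiro_W_excess n2 sz); lia.
- by move/(spiro_W_iso n0); rewrite W2; lia.
- move=> s sz s_niso s_niso2; rewrite W2 (spiro_W_excess n2 sz) ltn_add2l ltn_pmul2l //.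
  case: leqP => // small; case: s_niso2.
  have [k km [sk /(wt_le_size km) k_end]] := excess_le_meta_only sz s_niso small ltac:(lia).
  by apply: (spiro_iso_second n3 sz km sk); lia.
- move=> n5; split; [|split].
  + by move/(spiro_W_iso n0); rewrite W3; lia.
  + by move/(spiro_W_iso n0); rewrite W3 W2; lia.
  move=> s sz s_niso s_niso2 s_niso3; rewrite W3 (spiro_W_excess n2 sz) ltn_add2l ltn_pmul2l //.
  case: leqP => // small.
  have [k km [sk /(wt_le_2size km) [k_end | k_next]]] :=
    excess_le_meta_only (K := 2 * (n - 2 - 1)) sz s_niso ltac:(lia) ltac:(lia).
  + by case: s_niso2; apply: (spiro_iso_second n3 sz km sk); lia.
  + by case: s_niso3; apply: (spiro_iso_third hn sz km sk); lia.
Qed.
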